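(* Let $k_1,k_2,k_3$ be positive integers and let $D$ be a Hamiltonian digraph containing no subdivision of $B(k_1,k_2;k_3)$ as a subdigraph. Then $\chi(D)\le 4k$, where $k=\max\{k_1,k_2,k_3\}$.
   Context: Digraphs are orientations of finite simple graphs (no loops, no multiple arcs, no pair of opposite arcs). $\chi(D)$ is the chromatic number of the underlying undirected graph. A digraph is Hamiltonian if it contains a directed cycle through all its vertices. The $(2+1)$-bispindle $B(k_1,k_2;k_3)$ is the union of two directed $xy$-paths of lengths $k_1$ and $k_2$ and one directed $yx$-path of length $k_3$, these three paths being pairwise internally disjoint. A subdivision of a digraph $H$ is obtained by replacing each arc $(u,v)$ by a directed $uv$-path of length at least $1$, these paths being internally disjoint. *)

From mathcomp Require Import all_boot.
Set Implicit Arguments. Unset Strict Implicit. Unset Printing Implicit Defensive.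

(* A digraph on a finite vertex type V is given by its arc relation A : rel V.
   It is an orientation of a finite simple graph iff it has no loops and no
   pair of opposite arcs (multiple arcs are excluded by A being a relation). *)
Definition oriented_graph (V : finType) (A : rel V) : Prop :=
  forall x y : V, A x y -> ~~ A y x.

(* Proper colouring of the underlying undirected graph with n colours;
   chi(D) <= n  iff  colorable A n. *)
Definition colorable (V : finType) (A : rel V) (n : nat) : Prop :=
  exists c : V -> 'I_n, forall x y : V, A x y -> c x != c y.

Definition hamiltonian (V : finType) (A : rel V) : Prop :=
  exists s : seq V, [/\ uniq s, cycle A s & forall v : V, v \in s].

(* A directed xy-path with internal vertex sequence p: x, p_1, ..., p_m, y,
   all distinct, consecutive vertices joined by arcs.  Its length is size p + 1. *)
Definition dipath (V : finType) (A : rel V) (x y : V) (p : seq V) : bool :=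
  path A x (rcons p y) && uniq (x :: rcons p y).

(* D contains a subdivision of B(k1,k2;k3) as a subdigraph: there are distinct
   x, y, two distinct directed xy-paths of lengths >= k1 and >= k2 and a
   directed yx-path of length >= k3, pairwise internally disjoint. *)
Definition has_bispindle_subdivision (V : finType) (A : rel V)
    (k1 k2 k3 : nat) : Prop :=
  exists (x y : V) (p1 p2 p3 : seq V),
    [/\ x != y,
        [/\ dipath A x y p1, dipath A x y p2 & dipath A y x p3],
        p1 != p2,
        [/\ [disjoint p1 & p2], [disjoint p1 & p3] & [disjoint p2 & p3]] &
        [/\ k1 <= (size p1).+1, k2 <= (size p2).+1 & k3 <= (size p3).+1]].

From mathcomp Require Import all_boot zify.
Set Implicit Arguments. Unset Strict Implicit. Unset Printing Implicit Defensive.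

(* Let k = max(k1, k2, k3) and fix the Hamiltonian cycle C.  If arcs a -> b and
   c -> d of D have their ends in the cyclic order a, c, b, d on C and each of the
   four pieces of C between consecutive ends has length at least k, then
   a -> b -> C[b,d], C[a,c] -> d and C[d,a] form a subdivision of B(k1,k2;k3);
   the other orientations of the two chords are rotations of this configuration.
   So there is no such crossing pair, and we show that D is then
   (4k-2)-degenerate, hence greedily (4k-1)-colourable.
   In a vertex set H, call a chord long if each of the two arcs of C it cuts off
   contains at least 2k-1 vertices of H.  Since the neighbours w of u are sorted
   along C by the number of H-vertices strictly between u and w (in either
   direction), a vertex of H on no long chord has at most 4k-2 neighbours in H.
   If there is a long chord, take one, pq, with fewest H-vertices on the arc
   p -> q, and let u be the H-vertex of that arc with exactly k-1 H-vertices
   between p and u.  A long chord uw would either cut off fewer H-vertices than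
   pq does on p -> q, or cross pq with all four pieces of length at least k. *)

Section InjectiveCounting.
Variables (T : finType) (S : {set T}) (f : T -> nat) (t : nat).
Hypotheses (f_inj : {in S &, injective f}) (f_lt : {in S, forall x, f x < t}).

Let uniq_image : uniq (map f (enum S)).
Proof. by rewrite map_inj_in_uniq ?enum_uniq // => x y; rewrite !mem_enum; apply: f_inj. Qed.

Let image_sub : {subset map f (enum S) <= iota 0 t}.
Proof. by move=> y /mapP [x]; rewrite mem_enum => /f_lt fx ->; rewrite mem_iota. Qed.

Lemma card_le_inj_in : #|S| <= t.
Proof.
by rewrite cardE -(size_map f) -(size_iota 0 t); apply: uniq_leq_size.
Qed.

Lemma inj_in_onto_card : #|S| = t -> forall i, i < t -> exists2 x, x \in S & f x = i.
Proof.
move=> cardS i lt_it.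
have size_le : size (iota 0 t) <= size (map f (enum S)).
  by rewrite size_map -cardE cardS size_iota.
have [_ /(_ i)] := uniq_min_size uniq_image image_sub size_le.
rewrite mem_iota lt_it => /mapP [x].
by rewrite mem_enum => xS ->; exists x.
Qed.

End InjectiveCounting.

Lemma colorable_of_degenerate (V : finType) (A : rel V) d N :
  d < N -> irreflexive A ->
  (forall H : {set V}, H != set0 ->
     exists2 u, u \in H & #|[set w in H | A u w || A w u]| <= d) ->
  colorable A N.
Proof.
move=> ltdN irrA degenerate.
suff /(_ [set: V]) [c c_ok] : forall H : {set V},
    exists c : V -> 'I_N, {in H &, forall x y, A x y -> c x != c y}.
  by exists c => x y; apply: c_ok; rewrite inE.
move=> H; have [m] := ubnP #|H|; elim: m H => // m IH H /ltnSE le_H_m.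
have [-> | H_nonempty] := eqVneq H set0.
  by exists (fun=> Ordinal (leq_ltn_trans (leq0n d) ltdN)) => x; rewrite inE.
have [u uH deg_u] := degenerate H H_nonempty.
have [c c_ok] := IH (H :\ u) (leq_trans (proper_card (properD1 uH)) le_H_m).
set nb := [set w in H | A u w || A w u].
have [col col_free] : exists col, col \notin c @: nb.
  have lt_img_N : #|c @: nb| < N := leq_ltn_trans (leq_imset_card c nb) (leq_ltn_trans deg_u ltdN).
  have /set0Pn [col] : ~: (c @: nb) != set0.
    by rewrite -card_gt0 -(leq_add2l #|c @: nb|) addn1 cardsC card_ord.
  by rewrite inE; exists col.
exists (fun x => if x == u then col else c x) => x y xH yH Axy.
have nb_col w : w \in H -> A u w || A w u -> c w != col.
  by move=> wH Auw; apply: contraNneq col_free => <-; rewrite imset_f // inE wH.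
case: (eqVneq x u) => [xu | xNu]; case: (eqVneq y u) => [yu | yNu].
- by move: Axy; rewrite xu yu irrA.
- by rewrite eq_sym nb_col // -xu Axy.
- by rewrite nb_col // -yu Axy orbT.
- by apply: c_ok; rewrite // !inE ?xNu ?yNu.
Qed.

Lemma iota_path (r : rel nat) m len :
  (forall i, m <= i < m + len -> r i i.+1) -> path r m (iota m.+1 len).
Proof.
elim: len m => [|len IH] m r_step //=.
rewrite r_step ?leqnn ?addnS ?ltnS ?leq_addr //=.
by apply: IH => i /andP [lt_mi lt_i]; apply: r_step; rewrite ltnW //= addnS.
Qed.

Lemma last_iota m len : last m (iota m.+1 len) = m + len.
Proof. by elim: len m => [|len IH] m /=; rewrite ?addn0 // IH addSnnS. Qed.

Lemma rcons_iota m len : rcons (iota m len) (m + len) = iota m len.+1.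
Proof. by rewrite -cats1 -addn1 iotaD. Qed.

Lemma all_gtn_iota n m len : m + len <= n -> all (gtn n) (iota m len).
Proof. by move=> le_n; apply/allP => i; rewrite mem_iota /=; lia. Qed.

Section IndexedCycle.
Variables (V : finType) (A : rel V) (f : nat -> V) (n : nat).
Hypothesis f_inj : {in gtn n &, injective f}.

Lemma dipath_map a b (idx : seq nat) :
  all (gtn n) (a :: rcons idx b) -> uniq (a :: rcons idx b) ->
  path (relpre f A) a (rcons idx b) -> dipath A (f a) (f b) (map f idx).
Proof.
move=> /allP idx_lt idx_uniq idx_path.
rewrite /dipath -map_rcons path_map idx_path -map_cons map_inj_in_uniq //.
by move=> i j /idx_lt i_lt /idx_lt j_lt; apply: f_inj.
Qed.

Lemma disjoint_map (X Y : seq nat) :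
  all (gtn n) X -> all (gtn n) Y -> {in X, forall i, i \notin Y} ->
  [disjoint map f X & map f Y].
Proof.
move=> /allP X_lt /allP Y_lt XY; rewrite disjoint_has; apply/hasPn => _ /mapP [i iX ->].
apply/mapP => -[j jY /f_inj eq_ij]; move: (XY i iX).
by rewrite eq_ij ?jY //; [apply: X_lt | apply: Y_lt].
Qed.

Hypotheses (f_step : forall i, i < n -> A (f i) (f i.+1)) (f_wrap : f n = f 0).

Lemma indexed_cycle_bispindle k1 k2 k3 i j1 j2 :
  0 < i < j1 -> j1 < j2 < n -> A (f 0) (f j1) -> A (f i) (f j2) ->
  k1 <= (j2 - j1).+1 -> k2 <= i.+1 -> k3 <= n - j2 ->
  has_bispindle_subdivision A k1 k2 k3.
Proof.
move=> /andP [i_gt0 lt_i_j1] /andP [lt_j1_j2 lt_j2_n] A_0_j1 A_i_j2 len1 len2 len3.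
have n_gt0 : 0 < n by lia.
have seg_path m len : m + len < n -> path (relpre f A) m (iota m.+1 len).
  by move=> lt_n; apply: iota_path => l /andP [_ lt_l]; apply: f_step; lia.
pose I1 := iota j1 (j2 - j1); pose I2 := iota 1 i; pose I3 := iota j2.+1 (n - j2.+1).
have I1_lt : all (gtn n) I1 by apply: all_gtn_iota; lia.
have I2_lt : all (gtn n) I2 by apply: all_gtn_iota; lia.
have I3_lt : all (gtn n) I3 by apply: all_gtn_iota; lia.
have d12 : [disjoint map f I1 & map f I2].
  by apply: disjoint_map => // l; rewrite !mem_iota; lia.
exists (f 0), (f j2), (map f I1), (map f I2), (map f I3); split.
- by apply/eqP => eq_f; have := f_inj n_gt0 lt_j2_n eq_f; lia.
- split; apply: dipath_map => //.
  + by rewrite /= all_rcons I1_lt /gtn /=; lia.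
  + by rewrite /= mem_rcons rcons_uniq !inE !mem_iota iota_uniq; lia.
  + have -> : rcons I1 j2 = iota j1 (j2 - j1).+1 by rewrite -rcons_iota; congr rcons; lia.
    by rewrite /= A_0_j1 seg_path //; lia.
  + by rewrite /= all_rcons I2_lt /gtn /=; lia.
  + by rewrite /= mem_rcons rcons_uniq !inE !mem_iota iota_uniq; lia.
  + by rewrite rcons_path seg_path ?last_iota //=; lia.
  + by rewrite /= all_rcons I3_lt /gtn /=; lia.
  + by rewrite /= mem_rcons rcons_uniq !inE !mem_iota iota_uniq; lia.
  + rewrite rcons_path seg_path ?last_iota //=; last by lia.
    have -> : j2 + (n - j2.+1) = n.-1 by lia.
    by rewrite -f_wrap -[in f n](prednK n_gt0) f_step // prednK.
- have f1_I2 : f 1 \in map f I2 by apply: map_f; rewrite mem_iota; lia.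
  apply/eqP => eq_I12; move: d12; rewrite eq_I12 disjoint_has.
  by move=> /hasPn/(_ _ f1_I2); rewrite f1_I2.
- by split; apply: disjoint_map => // l; rewrite !mem_iota; lia.
- by rewrite !size_map !size_iota; split; lia.
Qed.

End IndexedCycle.

Lemma cycle_nth (T : Type) (e : rel T) (x0 : T) (s : seq T) i :
  cycle e s -> i < size s -> e (nth x0 s i) (nth x0 s (i.+1 %% size s)).
Proof.
case: s => [//|x p] /= /(pathP x0) e_step lt_i.
have := e_step i; rewrite size_rcons => /(_ lt_i).
rewrite -rcons_cons nth_rcons /= lt_i nth_rcons.
have [lt_ip | eq_ip] := ltnP i (size p); first by rewrite modn_small.
have -> : i = size p by apply/eqP; rewrite eqn_leq eq_ip -ltnS lt_i.
by rewrite eqxx modnn.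
Qed.

Section HamiltonianCycle.
Variables (V : finType) (A : rel V) (s : seq V).
Hypotheses (s_uniq : uniq s) (s_cycle : cycle A s) (s_all : forall v : V, v \in s).

Local Notation n := (size s).

Definition cdist (a b : V) :=
  if index a s <= index b s then index b s - index a s else n + index b s - index a s.

Definition cshift (z : V) i := nth z s ((index z s + i) %% n).

Let index_lt v : index v s < n.
Proof. by rewrite index_mem. Qed.

Let addn_mod m i : m < n -> i < n -> (m + i) %% n = if m + i < n then m + i else m + i - n.
Proof.
move=> lt_m lt_i; case: ifP => [lt_mi | /negbT]; first exact: modn_small.
rewrite -leqNgt => le_n_mi; rewrite -{1}(subnK le_n_mi) modnDr modn_small //; lia.
Qed.

Lemma cdist_lt a b : cdist a b < n.
Proof. by have := index_lt a; have := index_lt b; rewrite /cdist; case: ifP; lia. Qed.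

Lemma cdistxx a : cdist a a = 0.
Proof. by rewrite /cdist leqnn subnn. Qed.

Lemma cdist_inj z : injective (cdist z).
Proof.
move=> a b eq_ab; apply: index_inj; rewrite ?s_all //; move: eq_ab.
by have := index_lt a; have := index_lt b; have := index_lt z; rewrite /cdist; do 2 case: ifP; lia.
Qed.

Lemma cdist_gt0 a b : (0 < cdist a b) = (a != b).
Proof. by rewrite lt0n -(cdistxx a) (inj_eq (@cdist_inj a)) eq_sym. Qed.

Lemma cdist_rebase z a b : cdist a b =
  if cdist z a <= cdist z b then cdist z b - cdist z a else n + cdist z b - cdist z a.
Proof.
have := index_lt a; have := index_lt b; have := index_lt z.
by rewrite /cdist; repeat case: ifP; lia.
Qed.

Lemma cdist_le z a b : cdist z a <= cdist z b -> cdist a b = cdist z b - cdist z a.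
Proof. by move=> le_ab; rewrite (cdist_rebase z) le_ab. Qed.

Lemma cdist_gt z a b : cdist z b < cdist z a -> cdist a b = n + cdist z b - cdist z a.
Proof. by move=> lt_ba; rewrite (cdist_rebase z) leqNgt lt_ba. Qed.

Lemma cdist_inner z a b c :
  cdist z a < cdist z b < cdist z c -> 0 < cdist a b < cdist a c.
Proof.
case/andP=> lt_ab lt_bc.
by rewrite (cdist_le (ltnW lt_ab)) (cdist_le (ltnW (ltn_trans lt_ab lt_bc))); lia.
Qed.

Lemma cdist_inner_rot a b c : 0 < cdist a b < cdist a c -> 0 < cdist b c < cdist b a.
Proof.
case/andP=> ab_gt0 lt_bc; have lt_aa : cdist a a < cdist a b by rewrite cdistxx.
have := cdist_lt a c.
by rewrite (cdist_le (ltnW lt_bc)) (cdist_gt lt_aa) cdistxx; lia.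
Qed.

Lemma cshift_cdist z x : cshift z (cdist z x) = x.
Proof.
rewrite /cshift addn_mod ?cdist_lt ?index_lt //.
have -> : (if index z s + cdist z x < n then index z s + cdist z x
           else index z s + cdist z x - n) = index x s.
  by have := index_lt x; have := index_lt z; rewrite /cdist; do 2 case: ifP; lia.
exact: nth_index.
Qed.

Lemma cdist_cshift z i : i < n -> cdist z (cshift z i) = i.
Proof.
move=> lt_i; have lt_z := index_lt z.
have lt_mod : (index z s + i) %% n < n by rewrite ltn_mod; lia.
rewrite /cdist /cshift index_uniq // addn_mod //.
by do 2 case: ifP; lia.
Qed.

Lemma cshift0 z : cshift z 0 = z.
Proof. by rewrite -{1}(cdistxx z) cshift_cdist. Qed.

Lemma cshift_size z : cshift z n = cshift z 0.
Proof. by rewrite /cshift addn0 modnDr. Qed.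

Lemma cshift_step z i : A (cshift z i) (cshift z i.+1).
Proof.
have n_gt0 : 0 < n by have := index_lt z; lia.
rewrite /cshift; have -> : (index z s + i.+1) %% n = ((index z s + i) %% n).+1 %% n.
  by rewrite -[in RHS]addn1 modnDml addn1 addnS.
by apply: cycle_nth s_cycle _; rewrite ltn_mod.
Qed.

Definition adj a b := A a b || A b a.

(* The four distances along the cycle [a -> c -> b -> d -> a] add up to [n]
   exactly when the points occur on it in this cyclic order. *)
Definition crossing k a c b d :=
  [&& k <= cdist a c, k <= cdist c b, k <= cdist b d, k <= cdist d a
    & cdist a c + cdist c b + cdist b d + cdist d a == n].

Lemma crossing_rot k a c b d : crossing k a c b d -> crossing k c b d a.
Proof. by case/and5P=> *; apply/and5P; split=> //; apply/eqP; lia. Qed.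

Section Bispindle.
Variables k1 k2 k3 k : nat.
Hypotheses (k_gt0 : 0 < k) (le_k1 : k1 <= k) (le_k2 : k2 <= k) (le_k3 : k3 <= k).

Lemma crossing_arcs_bispindle a c b d :
  A a b -> A c d -> crossing k a c b d -> has_bispindle_subdivision A k1 k2 k3.
Proof.
move=> Aab Acd /and5P [ge_ac ge_cb ge_bd ge_da /eqP sum_n].
have cdist_ab : cdist a b = cdist a c + cdist c b.
  by move: (cdist_rebase a c b); case: ifP; lia.
have cdist_ad : cdist a d = cdist a b + cdist b d.
  by move: (cdist_rebase a b d); case: ifP; lia.
have lt_ad := cdist_lt a d.
apply: (@indexed_cycle_bispindle _ _ (cshift a) n _ _ _ _ _ _ (cdist a c) (cdist a b) (cdist a d)).
- by move=> i j lt_i lt_j /(congr1 (cdist a)); rewrite !cdist_cshift.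
- by move=> i _; apply: cshift_step.
- exact: cshift_size.
all: rewrite ?cshift0 ?cshift_cdist //; lia.
Qed.

Lemma crossing_chords_bispindle a c b d :
  adj a b -> adj c d -> crossing k a c b d -> has_bispindle_subdivision A k1 k2 k3.
Proof.
move=> /orP [Aab | Aba] /orP [Acd | Adc] cr.
- exact: crossing_arcs_bispindle Aab Acd cr.
- by apply: crossing_arcs_bispindle Adc Aab _; do 3 apply: crossing_rot.
- by apply: crossing_arcs_bispindle Acd Aba _; apply: crossing_rot.
- by apply: crossing_arcs_bispindle Aba Adc _; do 2 apply: crossing_rot.
Qed.

End Bispindle.

Section ArcCount.
Variable H : {set V}.

Definition arc_card a b := \sum_(y in H) (0 < cdist a y < cdist a b).

Lemma arc_cardE a b : arc_card a b = #|[set y in H | 0 < cdist a y < cdist a b]|.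
Proof.
rewrite /arc_card -sum1_card [LHS]big_mkcond [RHS]big_mkcond /=.
by apply: eq_bigr => y _; rewrite !inE; case: (y \in H); case: (_ < _ < _).
Qed.

Lemma arc_cardxx a : arc_card a a = 0.
Proof. by rewrite /arc_card big1 // => y _; rewrite cdistxx ltn0 andbF. Qed.

Lemma arc_card_split a x b : 0 < cdist a x < cdist a b ->
  arc_card a b = arc_card a x + (x \in H) + arc_card x b.
Proof.
move=> /andP [ax_gt0 lt_xb].
have split_y y : (0 < cdist a y < cdist a b : nat) =
    (0 < cdist a y < cdist a x : nat) + (y == x) + (0 < cdist x y < cdist x b : nat).
  rewrite -(inj_eq (@cdist_inj a)) (cdist_le (ltnW lt_xb)) (cdist_rebase a x y).
  by have := cdist_lt a y; have := cdist_lt a b; case: ifP; lia.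
rewrite /arc_card (eq_bigr _ (fun y _ => split_y y)) !big_split /=; congr (_ + _ + _).
have -> : \sum_(y in H) (y == x : nat) = \sum_(y | y == x) (y \in H : nat).
  by rewrite big_mkcond [RHS]big_mkcond; apply: eq_bigr => y _; case: eqP => [->|]; case: (_ \in H).
exact: big_pred1_eq.
Qed.

Lemma arc_card_split_in x : x \in H -> forall a b, 0 < cdist a x < cdist a b ->
  arc_card a b = arc_card a x + 1 + arc_card x b.
Proof. by move=> xH a b /arc_card_split ->; rewrite xH. Qed.

Lemma arc_card_lt a b : 0 < cdist a b -> arc_card a b < cdist a b.
Proof.
move=> ab_gt0; rewrite arc_cardE.
suff : #|[set y in H | 0 < cdist a y < cdist a b]| <= (cdist a b).-1 by lia.
apply: (@card_le_inj_in _ _ (fun y => (cdist a y).-1)) => [x y | y]; rewrite !inE.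
- by move=> /and3P [_ x_gt0 _] /and3P [_ y_gt0 _] eq_xy; apply: (@cdist_inj a); lia.
- by move=> /and3P [_ y_gt0 lt_yb]; lia.
Qed.

Lemma crossing_of_arc_cards k a c b d :
  0 < cdist a c -> cdist a c < cdist a b -> cdist a b < cdist a d ->
  k <= arc_card a c -> k <= arc_card c b -> k <= arc_card b d -> k <= arc_card d a ->
  crossing k.+1 a c b d.
Proof.
move=> ac_gt0 lt_cb lt_bd ge_ac ge_cb ge_bd ge_da.
have cdist_cb := cdist_le (ltnW lt_cb); have cdist_bd := cdist_le (ltnW lt_bd).
have lt_ad : cdist a a < cdist a d by rewrite cdistxx; lia.
have cdist_da := cdist_gt lt_ad; rewrite cdistxx in cdist_da.
have lt_ad_n := cdist_lt a d.
have gap x y : 0 < cdist x y -> k <= arc_card x y -> k < cdist x y.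
  by move=> /arc_card_lt lt_xy ge_xy; apply: leq_ltn_trans lt_xy.
by apply/and5P; split; try apply: gap; rewrite ?cdist_cb ?cdist_bd ?cdist_da //; lia.
Qed.

Lemma arc_card_le_l a x b : cdist a x <= cdist a b -> arc_card x b <= arc_card a b.
Proof.
case: (eqVneq x a) => [-> // | xNa]; rewrite leq_eqVlt => /orP [/eqP/cdist_inj -> | lt_xb].
  by rewrite arc_cardxx.
by rewrite (@arc_card_split a x b) ?leq_addl // cdist_gt0 eq_sym xNa.
Qed.

Lemma arc_card_le_r a x b : cdist a x <= cdist a b -> arc_card a x <= arc_card a b.
Proof.
case: (eqVneq x a) => [-> _ | xNa]; first by rewrite arc_cardxx.
rewrite leq_eqVlt => /orP [/eqP/cdist_inj -> // | lt_xb].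
by rewrite (@arc_card_split a x b) ?cdist_gt0 1?eq_sym ?xNa // -addnA leq_addr.
Qed.

Lemma cdist_mono_inj u (g : V -> nat) :
  (forall x y, x \in H -> y \in H -> x != u -> y != u ->
     cdist u x < cdist u y -> g x != g y) ->
  {in [set w in H | w != u] &, injective g}.
Proof.
move=> g_mono x y; rewrite !inE => /andP [xH xNu] /andP [yH yNu] eq_g.
apply: (@cdist_inj u); case: (ltngtP (cdist u x) (cdist u y)) => // [lt_xy | lt_yx].
- by move: (g_mono x y xH yH xNu yNu lt_xy); rewrite eq_g eqxx.
- by move: (g_mono y x yH xH yNu xNu lt_yx); rewrite eq_g eqxx.
Qed.

Lemma arc_card_inj_r u : {in [set w in H | w != u] &, injective (arc_card u)}.
Proof.
apply: cdist_mono_inj => x y xH _ xNu _ lt_xy.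
by rewrite neq_ltn (arc_card_split_in (a := u) (b := y) xH) ?lt_xy ?cdist_gt0 1?eq_sym ?xNu //; lia.
Qed.

Lemma arc_card_inj_l u : {in [set w in H | w != u] &, injective (arc_card^~ u)}.
Proof.
apply: cdist_mono_inj => x y _ yH xNu _ lt_xy.
have lt_ux : cdist u u < cdist u x by rewrite cdistxx cdist_gt0 eq_sym.
have cdist_xy := cdist_le (ltnW lt_xy); have cdist_xu := cdist_gt lt_ux.
rewrite cdistxx in cdist_xu; have lt_uy := cdist_lt u y.
by rewrite neq_ltn (arc_card_split_in (a := x) (b := u) yH) ?cdist_xy ?cdist_xu; lia.
Qed.

Definition nbrs u := [set w in H | adj u w].

Definition long_chord t p q :=
  [&& p \in H, q \in H, adj p q, t <= arc_card p q & t <= arc_card q p].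

Lemma long_chord_sym t p q : long_chord t p q = long_chord t q p.
Proof.
by rewrite /long_chord /adj orbC; case: (p \in H) (q \in H) (_ || _) => [] [] [] //=; rewrite andbC.
Qed.

Hypothesis A_irrefl : irreflexive A.

Lemma adj_neq u w : adj u w -> w != u.
Proof. by apply: contraTneq => ->; rewrite /adj A_irrefl. Qed.

Lemma card_nbrs_le u t : u \in H ->
  (forall w, w \in H -> adj u w -> ~~ long_chord t.+1 u w) -> #|nbrs u| <= 2 * t.+1.
Proof.
move=> uH no_long.
have card_short (g : V -> nat) : {in [set w in H | w != u] &, injective g} ->
    #|[set w in H | (w != u) && (g w <= t)]| <= t.+1.
  move=> g_inj; apply: card_le_inj_in => [x y | w]; rewrite !inE.
  - by move=> /and3P [xH xNu _] /and3P [yH yNu _]; apply: g_inj; rewrite inE ?xH ?yH.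
  - by case/and3P.
have sub : nbrs u \subset [set w in H | (w != u) && (arc_card u w <= t)] :|:
                          [set w in H | (w != u) && (arc_card w u <= t)].
  apply/subsetP => w; rewrite !inE => /andP [wH uw].
  rewrite wH adj_neq //=; move: (no_long w wH uw).
  by rewrite /long_chord uH wH uw /= negb_and -!leqNgt.
apply: (leq_trans (subset_leq_card sub)); rewrite cardsU.
have := card_short _ (@arc_card_inj_r u); have := card_short _ (@arc_card_inj_l u); lia.
Qed.

Variable k : nat.
Hypothesis crossing_free : forall a b c d, adj a b -> adj c d -> ~~ crossing k.+1 a c b d.

Lemma no_long_chord_at p q u w :
  long_chord (2 * k).+1 p q ->
  (forall a b, long_chord (2 * k).+1 a b -> arc_card p q <= arc_card a b) ->
  u \in H -> 0 < cdist p u < cdist p q -> arc_card p u = k ->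
  adj u w -> ~~ long_chord (2 * k).+1 u w.
Proof.
move=> long_pq pq_min uH pu_inner pu_k uw; apply/negP => long_uw.
have min_uw := pq_min u w long_uw.
have min_wu : arc_card p q <= arc_card w u by apply: pq_min; rewrite long_chord_sym.
case/and5P: long_pq => pH qH pq ge_pq _.
have split_pq := arc_card_split_in uH pu_inner; rewrite pu_k in split_pq.
move: (crossing_free pq uw) (adj_neq uw) (arc_card_split_in pH) (arc_card_split_in qH).
move=> {pq_min long_uw pq uw uH pH qH} no_cross wNu split_p split_q.
have /andP [pu_gt0 lt_uq] := pu_inner.
move: wNu; rewrite -(inj_eq (@cdist_inj p)) neq_ltn => /orP [lt_wu | lt_uw].
  by have := arc_card_le_l (ltnW lt_wu); rewrite pu_k; lia.
have [le_wq | lt_qw] := leqP (cdist p w) (cdist p q).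
  have le_uw_uq : cdist u w <= cdist u q.
    by rewrite (cdist_le (ltnW lt_uw)) (cdist_le (ltnW lt_uq)) leq_sub2r.
  by have := arc_card_le_r le_uw_uq; lia.
have inner_uqw : 0 < cdist u q < cdist u w by apply: (cdist_inner (z := p)); rewrite lt_uq.
have inner_wpu : 0 < cdist w p < cdist w u by do 2 apply: cdist_inner_rot; rewrite pu_gt0.
have split_uw := split_q _ _ inner_uqw; have split_wu := split_p _ _ inner_wpu.
by apply: (negP no_cross); apply: crossing_of_arc_cards => //; lia.
Qed.

Lemma low_degree_vertex : H != set0 -> exists2 u, u \in H & #|nbrs u| <= 2 * (2 * k).+1.
Proof.
move=> /set0Pn [u0 u0H].
have [/existsP [[p0 q0] long0] | /existsPn no_long] :=
  boolP [exists pq : V * V, long_chord (2 * k).+1 pq.1 pq.2]; last first.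
  by exists u0 => //; apply: card_nbrs_le => // w _ _; apply: (no_long (u0, w)).
have [[p q] /= long_pq pq_min] :=
  arg_minnP (P := fun pq : V * V => long_chord (2 * k).+1 pq.1 pq.2)
            (fun pq => arc_card pq.1 pq.2) long0.
have /and5P [_ _ _ ge_pq _] := long_pq.
have [u] : exists2 u, u \in [set x in H | 0 < cdist p x < cdist p q] & arc_card p u = k.
  apply: (inj_in_onto_card (f := arc_card p) (t := arc_card p q)); last 2 first.
  - by rewrite arc_cardE.
  - by lia.
  - apply: sub_in2 (@arc_card_inj_r p) => x; rewrite !inE => /and3P [xH px_gt0 _].
    by rewrite xH eq_sym -cdist_gt0.
  - by move=> x; rewrite inE => /andP [xH /(arc_card_split_in xH) ->]; lia.
rewrite inE => /andP [uH pu_inner] pu_k.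
exists u => //; apply: card_nbrs_le => // w wH uw.
by apply: (no_long_chord_at long_pq _ uH pu_inner pu_k uw) => a b /(pq_min (a, b)).
Qed.

End ArcCount.

End HamiltonianCycle.

Unset Implicit Arguments.

Theorem theorem8 (V : finType) (A : rel V) (k1 k2 k3 : nat) :
  0 < k1 -> 0 < k2 -> 0 < k3 ->
  oriented_graph A ->
  hamiltonian A ->
  ~ has_bispindle_subdivision A k1 k2 k3 ->
  colorable A (4 * maxn k1 (maxn k2 k3)).
Proof.
move=> k1_gt0 _ _ A_oriented [s [s_uniq s_cycle s_all]] no_bispindle.
set k := maxn k1 (maxn k2 k3).
have le_k1 : k1 <= k by rewrite leq_max leqnn.
have le_k2 : k2 <= k by rewrite !leq_max leqnn orbT.
have le_k3 : k3 <= k by rewrite !leq_max leqnn !orbT.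
have [k' def_k] : exists k', k = k'.+1 by exists k.-1; rewrite prednK // (leq_trans k1_gt0).
rewrite {}def_k in le_k1 le_k2 le_k3 *.
have A_irrefl : irreflexive A.
  by move=> x; apply/negP => Axx; move: (A_oriented x x Axx); rewrite Axx.
have crossing_free a b c d : adj A a b -> adj A c d -> ~~ crossing s k'.+1 a c b d.
  move=> ab cd; apply/negP => cr; apply: no_bispindle.
  exact: (crossing_chords_bispindle s_uniq s_cycle s_all (ltn0Sn k') le_k1 le_k2 le_k3 ab cd).
apply: (colorable_of_degenerate (d := 2 * (2 * k').+1)); [lia | exact: A_irrefl |].
by move=> H; apply: (low_degree_vertex s_uniq s_cycle s_all (H := H) A_irrefl crossing_free).
Qed.
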